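(* Let $\eta_1,\dots,\eta_n$ be admissible measures on $\mathbb R$; for each $i$ let $X_i$ have law $\cosh(x)\,\eta_i(dx)$ (a probability measure), and $U_i:=\tanh(X_i)$. Define $m_i:=\eta_i(\mathbb R)$, $\varepsilon_i:=1-m_i$, $\alpha:=\sum_{i=1}^n\varepsilon_i$, and $\nu:=\sum_{i=1}^n\mathbb E U_i^2$. Then $0\le m_i\le1$ for all $i$ and $\alpha\le\nu\le2\alpha$.
   Context: A finitely supported positive measure $\eta$ on $\mathbb R$ is called admissible if $\int e^x\,\eta(dx)=\int e^{-x}\,\eta(dx)=1$. *)

From HB Require Import structures.
From mathcomp Require Import all_boot all_order all_algebra.
From mathcomp Require Import all_classical all_reals.
From mathcomp Require Import sequences exp.
Set Implicit Arguments. Unset Strict Implicit. Unset Printing Implicit Defensive.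
Import Order.TTheory GRing.Theory Num.Theory.
Local Open Scope ring_scope.

(* A finitely supported positive measure on R is represented by a finite list
   of atoms (x, w) : the measure is  \sum_(p <- eta) p.2 * delta_{p.1},
   with all weights p.2 >= 0. *)
Definition fsmeasure (R : realType) := seq (R * R).

Definition fs_pos (R : realType) (eta : fsmeasure R) : Prop :=
  forall p, p \in eta -> 0 <= p.2.

Definition fs_int (R : realType) (eta : fsmeasure R) (f : R -> R) : R :=
  \sum_(p <- eta) p.2 * f p.1.

Definition fs_mass (R : realType) (eta : fsmeasure R) : R :=
  fs_int eta (fun _ => 1).

Definition admissible (R : realType) (eta : fsmeasure R) : Prop :=
  fs_pos eta /\ fs_int eta (@expR R) = 1 /\ fs_int eta (fun x => expR (- x)) = 1.

Definition coshR (R : realType) (x : R) : R := (expR x + expR (- x)) / 2.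
Definition sinhR (R : realType) (x : R) : R := (expR x - expR (- x)) / 2.
Definition tanhR (R : realType) (x : R) : R := sinhR x / coshR x.

(* expectation of g(X) where X has law cosh(x) eta(dx) *)
Definition law_expect (R : realType) (eta : fsmeasure R) (g : R -> R) : R :=
  fs_int eta (fun x => g x * coshR x).

From HB Require Import structures.
From mathcomp Require Import all_boot all_order all_algebra.
From mathcomp Require Import all_classical all_reals.
From mathcomp Require Import sequences exp.
From mathcomp Require Import ring lra.
Set Implicit Arguments. Unset Strict Implicit. Unset Printing Implicit Defensive.
Import Order.TTheory GRing.Theory Num.Theory.
Local Open Scope ring_scope.

(* Admissibility makes [cosh x eta(dx)] a probability measure,
   so [eps = 1 - m] is the integral of [cosh - 1] against [eta], while
   [E U^2] is that of [tanh^2 cosh = cosh - 1/cosh].  The theorem then follows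
   by integrating the pointwise inequalities
   [cosh - 1 <= cosh - 1/cosh <= 2 (cosh - 1)], valid because [cosh >= 1]. *)

Section Hyperbolic.
Variable R : realType.
Implicit Types x : R.

Lemma coshR_gt0 x : 0 < coshR x.
Proof. by rewrite /coshR divr_gt0 // addr_gt0 // expR_gt0. Qed.

Lemma sqr_coshR_sub_sqr_sinhR x : coshR x ^+ 2 - sinhR x ^+ 2 = 1.
Proof.
rewrite /coshR /sinhR expRN; field.
by rewrite gt_eqF // expR_gt0.
Qed.

Lemma coshR_ge1 x : 1 <= coshR x.
Proof.
have := sqr_coshR_sub_sqr_sinhR x; have := coshR_gt0 x.
have := sqr_ge0 (sinhR x); nra.
Qed.

Lemma sqr_tanhR_mul_coshR x : tanhR x ^+ 2 * coshR x = coshR x - (coshR x)^-1.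
Proof.
have c_neq0 : coshR x != 0 by rewrite gt_eqF // coshR_gt0.
have sinh2 : sinhR x ^+ 2 = coshR x ^+ 2 - 1.
  by rewrite -(sqr_coshR_sub_sqr_sinhR x); ring.
by rewrite /tanhR expr_div_n sinh2; field.
Qed.

Lemma coshR_sub1_le_sqr_tanhR_mul_coshR x :
  coshR x - 1 <= tanhR x ^+ 2 * coshR x.
Proof.
rewrite sqr_tanhR_mul_coshR lerD2l lerN2 invf_le1 ?coshR_gt0 //.
exact: coshR_ge1.
Qed.

(* [2 (c - 1) - (c - 1/c) = (c - 1)^2 / c]. *)
Lemma sqr_tanhR_mul_coshR_le x :
  tanhR x ^+ 2 * coshR x <= 2 * (coshR x - 1).
Proof.
rewrite sqr_tanhR_mul_coshR.
have c_gt0 := coshR_gt0 x; have c_ge1 := coshR_ge1 x.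
have cV : coshR x * (coshR x)^-1 = 1 by rewrite mulfV // gt_eqF.
nra.
Qed.

End Hyperbolic.

Section FiniteMeasure.
Variable R : realType.
Implicit Types (eta : fsmeasure R) (f g : R -> R).

Lemma fs_intD eta f g :
  fs_int eta (fun x => f x + g x) = fs_int eta f + fs_int eta g.
Proof. by rewrite /fs_int -big_split; apply: eq_bigr => p _; rewrite mulrDr. Qed.

Lemma fs_intB eta f g :
  fs_int eta (fun x => f x - g x) = fs_int eta f - fs_int eta g.
Proof. by rewrite /fs_int -sumrB; apply: eq_bigr => p _; rewrite mulrBr. Qed.

Lemma fs_intZ eta (a : R) f : fs_int eta (fun x => a * f x) = a * fs_int eta f.
Proof. by rewrite /fs_int mulr_sumr; apply: eq_bigr => p _; rewrite mulrCA. Qed.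

Lemma ler_fs_int eta f g : fs_pos eta -> (forall x, f x <= g x) ->
  fs_int eta f <= fs_int eta g.
Proof.
move=> eta_pos fg; rewrite /fs_int big_seq [leRHS]big_seq.
by apply: ler_sum => p /eta_pos w_ge0; rewrite ler_wpM2l.
Qed.

Lemma fs_mass_ge0 eta : fs_pos eta -> 0 <= fs_mass eta.
Proof.
move=> eta_pos; rewrite /fs_mass /fs_int big_seq sumr_ge0 // => p.
by move/eta_pos; rewrite mulr1.
Qed.

Lemma admissible_fs_int_coshR eta : admissible eta -> fs_int eta (@coshR R) = 1.
Proof.
move=> [_ [int_exp int_expN]].
have -> : @coshR R = fun x => 2^-1 * expR x + 2^-1 * expR (- x).
  by apply/funext => x; rewrite /coshR mulrDl !(mulrC _ 2^-1).
rewrite fs_intD !fs_intZ int_exp int_expN; lra.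
Qed.

Lemma admissible_fs_mass_le1 eta : admissible eta -> fs_mass eta <= 1.
Proof.
move=> adm; rewrite -(admissible_fs_int_coshR adm).
by apply: ler_fs_int => [|x]; [case: adm | exact: coshR_ge1].
Qed.

Lemma admissible_one_sub_fs_mass eta : admissible eta ->
  1 - fs_mass eta = fs_int eta (fun x => coshR x - 1).
Proof. by move=> adm; rewrite fs_intB admissible_fs_int_coshR. Qed.

Lemma admissible_law_expect_sqr_tanhR eta : admissible eta ->
  1 - fs_mass eta <= law_expect eta (fun x => tanhR x ^+ 2) <=
  2 * (1 - fs_mass eta).
Proof.
move=> adm; have [eta_pos _] := adm.
rewrite admissible_one_sub_fs_mass // -fs_intZ.
apply/andP; split; apply: ler_fs_int => // x.
  exact: coshR_sub1_le_sqr_tanhR_mul_coshR.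
exact: sqr_tanhR_mul_coshR_le.
Qed.

End FiniteMeasure.

Theorem lemma2 (R : realType) (n : nat) (eta : 'I_n -> fsmeasure R)
  (adm : forall i, admissible (eta i)) :
  let m := fun i => fs_mass (eta i) in
  let eps := fun i => 1 - m i in
  let alpha := \sum_(i < n) eps i in
  let nu := \sum_(i < n) law_expect (eta i) (fun x => tanhR x ^+ 2) in
  (forall i, 0 <= m i <= 1) /\ alpha <= nu <= 2 * alpha.
Proof.
move=> m eps alpha nu; split.
  move=> i; have [eta_pos _] := adm i.
  by rewrite fs_mass_ge0 // admissible_fs_mass_le1.
rewrite /alpha /nu mulr_sumr; apply/andP; split; apply: ler_sum => i _;
  by case/andP: (admissible_law_expect_sqr_tanhR (adm i)).
Qed.
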